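(* Every connected (finite, simple) graph $G$ satisfies $\mathrm{rc}(G) \leq 2\,\mathrm{f}(G) + 2$.
   Context: For an edge-coloring of a graph $G$, a path is rainbow if no two of its edges have the same color; $G$ is rainbow-connected if every pair of vertices is joined by a rainbow path. The rainbow connection number $\mathrm{rc}(G)$ is the minimum number of colors in an edge-coloring making $G$ rainbow-connected. The forest number $\mathrm{f}(G)$ is the maximum number of vertices of an induced subgraph of $G$ that is a forest. *)

From mathcomp Require Import all_boot.
From mathcomp Require Import boolp.
Set Implicit Arguments. Unset Strict Implicit. Unset Printing Implicit Defensive.

Definition simple_graph (T : finType) (e : rel T) : Prop :=
  symmetric e /\ irreflexive e.

Definition connected_graph (T : finType) (e : rel T) : Prop :=
  forall x y : T, connect e x y.

(* An edge-coloring with colors in 'I_k: a function on ordered pairs that is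
   symmetric on edges (so it is really a function of the unordered edge). *)
Definition edge_coloring (T : finType) (e : rel T) (k : nat)
  (c : T -> T -> 'I_k) : Prop :=
  forall x y, e x y -> c x y = c y x.

Definition path_colors (T : finType) (k : nat) (c : T -> T -> 'I_k)
  (x : T) (p : seq T) : seq 'I_k :=
  [seq c uv.1 uv.2 | uv <- zip (x :: p) p].

Definition rainbow_path (T : finType) (e : rel T) (k : nat)
  (c : T -> T -> 'I_k) (x y : T) (p : seq T) : bool :=
  [&& path e x p, last x p == y, uniq (x :: p) & uniq (path_colors c x p)].

Definition rainbow_connected (T : finType) (e : rel T) (k : nat)
  (c : T -> T -> 'I_k) : Prop :=
  forall x y : T, exists p : seq T, rainbow_path e c x y p.

Definition rc_colorable (T : finType) (e : rel T) (k : nat) : Prop :=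
  exists c : T -> T -> 'I_k, edge_coloring e c /\ rainbow_connected e c.

(* For a connected
   graph such k exists and is < #|T| (spanning tree), so searching k <= #|T|
   is exhaustive; the fallback value #|T| is never reached for connected G. *)
Definition rc (T : finType) (e : rel T) : nat :=
  \big[minn/#|T|]_(k < #|T|.+1 | `[< rc_colorable e k >]) k.

Definition induced_forest (T : finType) (e : rel T) (S : {set T}) : bool :=
  [forall n : 'I_#|T|.+1,
    [forall t : n.-tuple T,
      ~~ [&& 3 <= n, uniq t, all (mem S) t & cycle e t]]].

Definition forest_number (T : finType) (e : rel T) : nat :=
  \max_(S : {set T} | induced_forest e S) #|S|.

From mathcomp Require Import all_boot order boolp zify.
Set Implicit Arguments. Unset Strict Implicit. Unset Printing Implicit Defensive.

(* Grow a tree, given by its vertices s in insertion order and a parent map,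
   together with an induced forest Y inside it such that |s| < 2|Y|.  While some
   vertex outside s has at most one neighbor in s, walk from s towards it and stop
   at the first such vertex b: its predecessor a lies in s or has two neighbors
   there, so attaching a (if needed) and then b adds at most two vertices to the
   tree, while b, having at most one neighbor in Y, extends the forest.  Once every
   vertex v outside s has two neighbors in s, fix one of them, t(v), and color the
   edge from a tree vertex z to its parent by the position of z in s, the edge
   v t(v) by |s|, and every other edge by 0.  A rainbow path from x to y leaves x
   along a 0-edge, follows the tree and enters y along its |s|-edge; hence in fact
   rc(G) <= |s| + 1 <= 2 f(G). *)

Lemma path_entry_edge (T : Type) (e : rel T) (P : pred T) x p :
  path e x p -> ~~ P x -> P (last x p) -> exists a b, [/\ e a b, ~~ P a & P b].
Proof.
elim: p x => [|y p IHp] x /=; first by move=> _ /negbTE ->.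
case/andP=> exy yp NPx; have [Py _ | NPy] := boolP (P y); first by exists x, y.
exact: IHp.
Qed.

Lemma path_zipP (T : eqType) (R : rel T) x p a b :
  path R x p -> (a, b) \in zip (x :: p) p -> [/\ R a b, a \in x :: p & b \in p].
Proof.
elim: p x => [|y p IHp] x //= /andP [Rxy Rp].
rewrite inE => /orP [/eqP [-> ->] | /(IHp _ Rp) [Rab ap bp]].
  by rewrite Rxy !inE !eqxx.
by rewrite Rab ap orbT inE bp orbT.
Qed.

Lemma cycle_neighbors (T : eqType) (e : rel T) s v :
  uniq s -> 2 < size s -> cycle e s -> v \in s ->
  exists a b, [/\ a != b, a \in [predD1 s & v], b \in [predD1 s & v], e v a & e b v].
Proof.
move=> Us s3 Cs /rot_to [i t rot_s].
have mem_s x : (x \in s) = (x \in v :: t) by rewrite -(mem_rot i) rot_s.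
have size_s : size s = (size t).+1 by rewrite -(size_rot i) rot_s.
move: Us Cs; rewrite -(rot_uniq i) -(rot_cycle i) rot_s.
case: t mem_s size_s {rot_s} => [|a t] mem_s size_s; first by rewrite size_s in s3.
case/lastP: t mem_s size_s => [|t b] mem_s size_s; first by rewrite size_s in s3.
rewrite /= rcons_path last_rcons !inE mem_rcons !inE !negb_or.
case/and3P=> /and3P [va vb _] + _ /and3P [eva _ ebv].
rewrite mem_rcons inE negb_or => /andP [ab _].
exists a, b; rewrite !(inE, mem_s, mem_rcons) !eqxx !orbT ![_ == v]eq_sym va vb.
by split.
Qed.

Section PathColors.
Variables (T : finType) (e : rel T) (k : nat) (c : T -> T -> 'I_k).

Lemma path_colors_rcons x p y :
  path_colors c x (rcons p y) = rcons (path_colors c x p) (c (last x p) y).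
Proof. by elim: p x => [|z p IHp] x //=; rewrite -IHp. Qed.

Lemma uniq_path_colors (R : rel T) x p :
  (forall a b a' b', R a b -> R a' b' -> c a b = c a' b' -> [set a; b] = [set a'; b']) ->
  path R x p -> uniq (x :: p) -> uniq (path_colors c x p).
Proof.
move=> c_inj; elim: p x => [|y p IHp] x //= /andP [Rxy Rp] /andP [xNp Up].
rewrite IHp // andbT; apply/mapP => -[[a b] ab /= cE].
have [Rab ap bp] := path_zipP Rp ab.
have : x \in [set a; b] by rewrite -(c_inj _ _ _ _ Rxy Rab cE) set21.
by rewrite !inE => /orP [] /eqP xE; move: xNp; rewrite xE ?ap // inE bp orbT.
Qed.

Lemma rainbow_path_cons x y a p :
  e x a -> x \notin a :: p -> c x a \notin path_colors c a p ->
  rainbow_path e c a y p -> rainbow_path e c x y (a :: p).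
Proof.
move=> exa xNp cNp /and4P [ap ay Up Uc]; apply/and4P; split => //=; first exact/andP.
  by rewrite xNp.
by rewrite cNp.
Qed.

Lemma rainbow_path_rcons x y b p :
  e b y -> y \notin x :: p -> c b y \notin path_colors c x p ->
  rainbow_path e c x b p -> rainbow_path e c x y (rcons p y).
Proof.
move=> eby yNp cNp /and4P [xp /eqP xb Up Uc].
rewrite /rainbow_path rcons_path last_rcons -rcons_cons rcons_uniq.
by rewrite path_colors_rcons rcons_uniq xb eby xp yNp Up cNp Uc eqxx.
Qed.

End PathColors.

Section InducedForest.
Variables (T : finType) (e : rel T).

Lemma induced_forestP (S : {set T}) :
  reflect (forall s : seq T, uniq s -> {subset s <= S} -> 2 < size s -> ~~ cycle e s)
          (induced_forest e S).
Proof.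
apply: (iffP forallP) => [forestS s Us /allP sS s3 | acyclic n].
  have sT : size s < #|T|.+1 by rewrite ltnS -(card_uniqP Us) max_card.
  by have /forallP/(_ (in_tuple s)) := forestS (Ordinal sT); rewrite s3 Us sS.
apply/forallP => t; apply/negP => /and4P [n3 Ut /allP tS Ct].
by move: (acyclic t Ut tS); rewrite size_tuple n3 Ct => /(_ isT).
Qed.

Lemma induced_forest0 : induced_forest e set0.
Proof. by apply/induced_forestP => -[|x s] // _ /(_ x (mem_head x s)); rewrite inE. Qed.

Hypothesis e_sym : symmetric e.

Lemma induced_forest_setU1 (S : {set T}) v :
  induced_forest e S -> #|[set y in S | e v y]| <= 1 -> induced_forest e (v |: S).
Proof.
move=> /induced_forestP forestS deg_v; apply/induced_forestP => s Us sS s3.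
have [vs | vNs] := boolP (v \in s); last first.
  apply: forestS => // x xs; have := sS x xs; rewrite !inE => /orP [/eqP xv | //].
  by rewrite -xv xs in vNs.
apply/negP => Cs; have [a [b [ab aS bS eva ebv]]] := cycle_neighbors Us s3 Cs vs.
have inS x : x \in [predD1 s & v] -> x \in S.
  by case/andP=> xv /sS; rewrite !inE (negbTE xv).
suff : 1 < #|[set y in S | e v y]| by rewrite ltnNge deg_v.
by apply/card_gt1P; exists a, b; rewrite !inE inS // inS // eva e_sym ebv.
Qed.

Lemma induced_forest1 v : induced_forest e [set v].
Proof.
rewrite -[[set v]]setU0; apply: induced_forest_setU1 induced_forest0 _.
by rewrite setIdE set0I cards0.
Qed.

Lemma card_le_forest_number (S : {set T}) : induced_forest e S -> #|S| <= forest_number e.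
Proof. exact: leq_bigmax_cond. Qed.

End InducedForest.

Lemma rc_le_card (T : finType) (e : rel T) : rc e <= #|T|.
Proof. by rewrite /rc -minEnat; apply: (@Order.TotalTheory.bigmin_le_id _ nat). Qed.

Lemma rc_le_colorable (T : finType) (e : rel T) k : rc_colorable e k -> rc e <= k.
Proof.
move=> colorable; have [kT | /ltnW Tk] := leqP k #|T|; last exact: leq_trans (rc_le_card e) Tk.
rewrite /rc -minEnat; rewrite -ltnS in kT.
by apply: (@Order.TotalTheory.bigmin_le_cond _ nat _ _ (Ordinal kT)); apply/asboolP.
Qed.

Section RootedTree.
Variables (T : finType) (e : rel T).
Hypothesis e_sym : symmetric e.

(* The position of a vertex in [s] is the time it was attached to the tree. *)
Definition rooted_tree (s : seq T) (par : T -> T) : Prop :=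
  uniq s /\ {in s, forall z, 0 < index z s -> e z (par z) /\ index (par z) s < index z s}.

Lemma rooted_tree1 r : rooted_tree [:: r] id.
Proof. by split => // z; rewrite inE => /eqP ->; rewrite index_head. Qed.

Lemma rooted_tree_rcons s par v w :
  rooted_tree s par -> v \notin s -> w \in s -> e v w ->
  rooted_tree (rcons s v) (fun z => if z == v then w else par z).
Proof.
move=> [Us par_lt] vNs ws evw; split; first by rewrite rcons_uniq vNs.
have index_rcons z : z \in s -> index z (rcons s v) = index z s.
  by rewrite -cats1 index_cat => ->.
have index_v : index v (rcons s v) = size s.
  by rewrite -cats1 index_cat (negbTE vNs) /= eqxx addn0.
move=> z; rewrite mem_rcons inE => /orP [/eqP -> | zs].
  by rewrite eqxx index_v index_rcons // index_mem.
have -> : (z == v) = false by apply: contraNF vNs => /eqP <-.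
rewrite index_rcons // => /(par_lt z zs) [ezp lt_zp]; split => //.
by rewrite index_rcons // -index_mem (ltn_trans lt_zp) // index_mem.
Qed.

Variables (s : seq T) (par : T -> T).
Hypothesis s_tree : rooted_tree s par.

Definition tree_edge (x y : T) : bool :=
  [&& x \in s, 0 < index x s & y == par x] || [&& y \in s, 0 < index y s & x == par y].

Lemma tree_edge_sym : symmetric tree_edge.
Proof. by move=> x y; rewrite /tree_edge orbC. Qed.

Lemma parent_mem z : z \in s -> 0 < index z s -> par z \in s.
Proof.
case: s_tree => _ par_lt zs /(par_lt z zs) [_ lt_zp].
by rewrite -index_mem (ltn_trans lt_zp) // index_mem.
Qed.

Lemma tree_edge_child x y : tree_edge x y ->
  exists2 z, z \in s /\ 0 < index z s &
    maxn (index x s) (index y s) = index z s /\ [set x; y] = [set z; par z].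
Proof.
case: s_tree => _ par_lt.
case/orP=> /and3P [zs z0 /eqP ->]; have [_ /ltnW lt_zp] := par_lt _ zs z0.
  by exists x => //; rewrite (maxn_idPl lt_zp).
by exists y => //; rewrite (maxn_idPr lt_zp) setUC.
Qed.

Lemma tree_edge_sub : subrel tree_edge e.
Proof.
case: s_tree => _ par_lt x y.
by case/orP=> /and3P [zs z0 /eqP ->]; have [ezp _] := par_lt _ zs z0; rewrite // e_sym.
Qed.

Lemma tree_edge_memr x y : tree_edge x y -> y \in s.
Proof. by case/orP=> /and3P [zs z0 /eqP E]; rewrite // E parent_mem. Qed.

Lemma tree_path_sub x p : path tree_edge x p -> {subset p <= s}.
Proof.
elim: p x => [|y p IHp] x //= /andP [/tree_edge_memr ys /IHp ps] z.
by rewrite inE => /orP [/eqP -> | /ps].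
Qed.

Lemma connect_tree_head z : z \in s -> connect tree_edge z (nth z s 0).
Proof.
have [n] := ubnP (index z s); elim: n z => // n IHn z; rewrite ltnS => lt_zn zs.
have [z0 | z_pos] := posnP (index z s); first by rewrite -z0 nth_index.
have ps := parent_mem zs z_pos.
have s_pos : 0 < size s by rewrite -has_predT; apply/hasP; exists z.
rewrite (set_nth_default (par z)) //; apply: connect_trans (IHn _ _ ps).
  by apply: connect1; rewrite /tree_edge zs z_pos eqxx.
by case: s_tree => _ /(_ z zs z_pos) [_ /leq_trans]; apply.
Qed.

Lemma tree_path u w : u \in s -> w \in s ->
  exists2 q, path tree_edge u q & last u q = w /\ uniq (u :: q).
Proof.
move=> us ws; have s_pos : 0 < size s by rewrite -has_predT; apply/hasP; exists u.
have : connect tree_edge u w.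
  apply: connect_trans (connect_tree_head us) _.
  rewrite (sym_connect_sym tree_edge_sym) (set_nth_default w) //.
  exact: connect_tree_head.
by case/connectP=> p /shortenP [q uq Uq _] ->; exists q.
Qed.

End RootedTree.

Definition dominates_twice (T : finType) (e : rel T) (s : seq T) : bool :=
  [forall v, (v \notin s) ==> (1 < #|[set y in s | e v y]|)].

Section TreeColoring.
Variables (T : finType) (e : rel T) (s : seq T) (par : T -> T).
Hypotheses (e_sym : symmetric e) (s_tree : rooted_tree e s par) (s_dom : dominates_twice e s).

Definition top_neighbor (v : T) : T := odflt v [pick y in s | e v y].

Lemma top_neighborP v : v \notin s ->
  [/\ top_neighbor v \in s, e v (top_neighbor v)
    & exists a, [/\ a \in s, e v a & a != top_neighbor v]].
Proof.
move=> vNs; have /card_gt1P [a [b [+ + ab]]] := implyP (forallP s_dom v) vNs.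
rewrite !inE => /andP [a_s eva] /andP [b_s evb].
rewrite /top_neighbor; case: pickP => [y /andP [ys evy] | /(_ a)]; last by rewrite a_s eva.
split => //; have [ay | ay] := eqVneq a y; last by exists a.
by exists b; rewrite -ay eq_sym.
Qed.

(* On a tree edge, [maxn] is the position of the child. *)
Definition tree_coloring (x y : T) : 'I_(size s).+1 :=
  match x \in s, y \in s with
  | true, true => inord (maxn (index x s) (index y s))
  | true, false => if x == top_neighbor y then ord_max else ord0
  | false, true => if y == top_neighbor x then ord_max else ord0
  | false, false => ord0
  end.

Lemma tree_coloring_sym x y : tree_coloring x y = tree_coloring y x.
Proof. by rewrite /tree_coloring; case: (x \in s); case: (y \in s); rewrite // maxnC. Qed.

Lemma tree_coloring_edge x y : tree_edge s par x y ->
  exists2 z, z \in s /\ 0 < index z s &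
    tree_coloring x y = index z s :> nat /\ [set x; y] = [set z; par z].
Proof.
move=> xy; have ys := tree_edge_memr s_tree xy.
have xs := tree_edge_memr s_tree (etrans (tree_edge_sym s par y x) xy).
have [z [zs z0] [cz Ez]] := tree_edge_child s_tree xy; exists z => //.
by rewrite /tree_coloring xs ys cz inordK // ltnS ltnW // index_mem.
Qed.

Lemma tree_path_colors u q : path (tree_edge s par) u q -> uniq (u :: q) ->
  uniq (path_colors tree_coloring u q) /\
  {in path_colors tree_coloring u q, forall i : 'I_(size s).+1, 0 < i < size s}.
Proof.
move=> uq Uq; split.
  apply: uniq_path_colors uq Uq => a b a' b'.
  move=> /tree_coloring_edge [z [zs _] [cz ->]] /tree_coloring_edge [z' [z's _] [cz' ->]].
  by move/(congr1 (@nat_of_ord _)); rewrite cz cz' => /index_inj-> //.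
move=> i /mapP [[a b] /(path_zipP uq) [ab _ _] ->] /=.
by have [z [zs z0] [-> _]] := tree_coloring_edge ab; rewrite z0 index_mem.
Qed.

Lemma rainbow_path_to_tree x w : w \in s ->
  exists q, [/\ rainbow_path e tree_coloring x w q, {subset q <= s}
              & ord_max \notin path_colors tree_coloring x q].
Proof.
move=> ws; have tree_rainbow u : u \in s -> exists q,
    [/\ rainbow_path e tree_coloring u w q, {subset q <= s}
      & {in path_colors tree_coloring u q, forall i : 'I_(size s).+1, 0 < i < size s}].
  move=> us; have [q uq [lq Uq]] := tree_path s_tree us ws.
  have [Uc bounds] := tree_path_colors uq Uq; exists q; split => //.
    by apply/and4P; split; rewrite ?lq ?(sub_path (tree_edge_sub e_sym s_tree) uq).
  exact: (tree_path_sub s_tree uq).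
have [xs | xNs] := boolP (x \in s).
  have [q [xq qs bounds]] := tree_rainbow x xs; exists q; split => //.
  by apply/negP => /bounds; rewrite ltnn andbF.
have [_ _ [a [a_s exa a_top]]] := top_neighborP xNs.
have [q [aq qs bounds]] := tree_rainbow a a_s.
have cxa : tree_coloring x a = ord0 by rewrite /tree_coloring (negbTE xNs) a_s (negbTE a_top).
exists (a :: q); split.
- apply: rainbow_path_cons aq; rewrite // ?cxa.
    by apply: contra xNs; rewrite inE => /orP [/eqP -> // | /qs].
  by apply/negP => /bounds; rewrite ltnn.
- by move=> z; rewrite inE => /orP [/eqP -> // | /qs].
rewrite /path_colors /= -/(path_colors _ a q) cxa inE negb_or.
have s_pos : 0 < size s by rewrite -has_predT; apply/hasP; exists a.
rewrite -val_eqE /= -lt0n s_pos; apply/negP => /bounds.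
by rewrite ltnn andbF.
Qed.

Lemma tree_coloring_rainbow : rainbow_connected e tree_coloring.
Proof.
move=> x y; have [ys | yNs] := boolP (y \in s).
  by have [q [xq _ _]] := rainbow_path_to_tree x ys; exists q.
have [<- | xy] := eqVneq x y; first by exists [::]; rewrite /rainbow_path /= eqxx.
have [bs eyb _] := top_neighborP yNs.
have [q [xq qs Nmax]] := rainbow_path_to_tree x bs.
exists (rcons q y); apply: rainbow_path_rcons xq; rewrite 1?e_sym //.
  by rewrite inE negb_or eq_sym xy; apply: contra yNs => /qs.
by rewrite /tree_coloring bs (negbTE yNs) eqxx.
Qed.

Lemma rc_colorable_tree : rc_colorable e (size s).+1.
Proof.
exists tree_coloring; split => [x y _ |]; first exact: tree_coloring_sym.
exact: tree_coloring_rainbow.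
Qed.

End TreeColoring.

Section GreedyConstruction.
Variables (T : finType) (e : rel T).
Hypotheses (e_sym : symmetric e) (e_connected : connected_graph e).

Definition majority_forest (s : seq T) (par : T -> T) (Y : {set T}) : Prop :=
  [/\ rooted_tree e s par, {subset Y <= s}, induced_forest e Y & size s < 2 * #|Y|].

Lemma majority_forest1 r : majority_forest [:: r] id [set r].
Proof.
split; rewrite ?cards1 //; first exact: rooted_tree1.
  by move=> z; rewrite !inE.
exact: induced_forest1.
Qed.

Lemma grow_majority_forest s par Y :
  majority_forest s par Y -> ~~ dominates_twice e s ->
  exists s' par' Y', majority_forest s' par' Y' /\ size s < size s'.
Proof.
move=> [s_tree Ys forestY sY] /forallPn [v]; rewrite negb_imply -leqNgt => /andP [vNs deg_v].
pose bad z := (z \notin s) && (#|[set y in s | e z y]| <= 1).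
have /card_gt0P [r rY] : 0 < #|Y| by lia.
have [a [b [eab a_good /andP [bNs deg_b]]]] : exists a b, [/\ e a b, ~~ bad a & bad b].
  have /connectP [p rp vE] := e_connected r v.
  by apply: path_entry_edge rp _ _; rewrite -?vE /bad ?(Ys r rY) // vNs deg_v.
have ab : a != b by apply: contraNneq a_good => ->; rewrite /bad bNs deg_b.
have forestYb : induced_forest e (b |: Y).
  apply: induced_forest_setU1 forestY (leq_trans (subset_leq_card _) deg_b) => //.
  by apply/subsetP => y; rewrite !inE => /andP [/Ys -> ->].
have cardYb : #|b |: Y| = #|Y|.+1 by rewrite cardsU1 (contra (@Ys b) bNs).
have [a_s | aNs] := boolP (a \in s).
  exists (rcons s b), (fun z => if z == b then a else par z), (b |: Y).
  rewrite size_rcons; split => //; split => //.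
  + by apply: rooted_tree_rcons; rewrite // e_sym.
  + by move=> z; rewrite !inE mem_rcons inE => /orP [-> // | /Ys ->]; rewrite orbT.
  + by rewrite size_rcons cardYb; lia.
have [w w_s eaw] : exists2 w, w \in s & e a w.
  move: a_good; rewrite /bad aNs -ltnNge => /ltnW /card_gt0P [w].
  by rewrite inE => /andP [w_s eaw]; exists w.
have sa_tree := rooted_tree_rcons s_tree aNs w_s eaw.
have bNsa : b \notin rcons s a by rewrite mem_rcons inE negb_or eq_sym ab.
have a_sa : a \in rcons s a by rewrite mem_rcons mem_head.
have sab_tree := rooted_tree_rcons sa_tree bNsa a_sa (etrans (e_sym b a) eab).
exists (rcons (rcons s a) b); eexists; exists (b |: Y); split; last by rewrite !size_rcons.
split => //; first exact: sab_tree.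
  by move=> z; rewrite !(inE, mem_rcons) => /orP [-> // | /Ys ->]; rewrite !orbT.
by rewrite !size_rcons cardYb; lia.
Qed.

Lemma majority_forest_dominating s par Y : majority_forest s par Y ->
  exists s' par' Y', majority_forest s' par' Y' /\ dominates_twice e s'.
Proof.
have [n] := ubnP (#|T| - size s); elim: n s par Y => // n IHn s par Y.
rewrite ltnS => le_n maj; have [dom | Ndom] := boolP (dominates_twice e s).
  by exists s, par, Y.
have [s' [par' [Y' [maj' lt_s]]]] := grow_majority_forest maj Ndom.
have [[Us' _] _ _ _] := maj'; apply: IHn maj'.
have : size s' <= #|T| by rewrite -(card_uniqP Us') max_card.
lia.
Qed.

End GreedyConstruction.

Theorem theorem3 (T : finType) (e : rel T) :
  simple_graph e -> connected_graph e ->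
  rc e <= 2 * forest_number e + 2.
Proof.
move=> [e_sym _] e_connected.
have [r _ | T0] := pickP (fun _ : T => true); last first.
  by rewrite (leq_trans (rc_le_card e)) // (eq_card0 T0).
have [s [par [Y [[s_tree _ forestY sY] dom]]]] :=
  majority_forest_dominating e_sym e_connected (majority_forest1 e_sym r).
have := rc_le_colorable (rc_colorable_tree e_sym s_tree dom).
have := card_le_forest_number forestY.
lia.
Qed.
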